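(* Let $n=pq$ where $p$ and $q$ are distinct odd primes, and let $\lambda=\operatorname{lcm}(p^2+p+1,\,q^2+q+1)$. Let $a,b\in\mathbb{Z}$ be such that $f(X)=X^3-aX^2+bX-1$ is irreducible modulo $p$ and modulo $q$, and such that $L(a,b)$ (defined below) is invertible modulo $n$. Then for every integer $k$, the pair $(s_k(a,b),s_{-k}(a,b))$ lies in $\Gamma$ and $$\frac{L\big(s_k(a,b),\,s_{-k}(a,b)\big)}{L(a,b)}\equiv k \pmod n.$$
   Context: For integers (or residues modulo $n^2$) $x,y$, the sequence $(s_k(x,y))_{k\in\mathbb{Z}}$ modulo $n^2$ is defined by the recurrence $s_{k+3}(x,y)\equiv x\,s_{k+2}(x,y)-y\,s_{k+1}(x,y)+s_k(x,y)\pmod{n^2}$ for all $k\in\mathbb{Z}$ and initial values $s_0(x,y)\equiv 3$, $s_1(x,y)\equiv x$, $s_{-1}(x,y)\equiv y\pmod{n^2}$ (the recurrence determines the sequence for all $k\in\mathbb{Z}$). Let $\Gamma=\{(x,y)\in\mathbb{Z}^2 : s_\lambda(x,y)\equiv 3 \pmod n\}$ and define $L:\Gamma\to\mathbb{Z}/n\mathbb{Z}$ by $L(x,y)=\frac{s_\lambda(x,y)-3}{n} \bmod n$, where $s_\lambda(x,y)$ is taken as a representative modulo $n^2$ (this is well defined since $s_\lambda(x,y)-3$ is divisible by $n$). *)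

From HB Require Import structures.
From mathcomp Require Import all_boot all_order all_algebra.
Set Implicit Arguments. Unset Strict Implicit. Unset Printing Implicit Defensive.
Import Order.TTheory GRing.Theory Num.Theory.
Local Open Scope ring_scope.

(* Exact integer sequence: triples (s_{k-1}, s_k, s_{k+1}). *)
Definition fwd_step (x y : int) (t : int * int * int) : int * int * int :=
  let: (u, v, w) := t in (v, w, x * w - y * v + u).
Definition bwd_step (x y : int) (t : int * int * int) : int * int * int :=
  let: (u, v, w) := t in (w - x * v + y * u, u, v).

(* s_k(x,y) over Z, with s_{-1} = y, s_0 = 3, s_1 = x and
   s_{k+3} = x s_{k+2} - y s_{k+1} + s_k for all k in Z. *)
Definition sZ (k : int) (x y : int) : int :=
  match k with
  | Posz m => (iter m (fwd_step x y) (y, 3, x)).1.2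
  | Negz m => (iter m.+1 (bwd_step x y) (y, 3, x)).1.2
  end.

Definition s_mod (n : nat) (k : int) (x y : int) : int :=
  (sZ k x y %% (n ^ 2)%:Z)%Z.

Definition Gamma (n lam : nat) (x y : int) : Prop :=
  (n%:Z %| s_mod n lam%:Z x y - 3)%Z.

Definition L (n lam : nat) (x y : int) : 'Z_n :=
  (((s_mod n lam%:Z x y - 3) %/ n%:Z)%Z)%:~R.

Definition fpoly (p : nat) (a b : int) : {poly 'F_p} :=
  'X^3 - (a%:~R) *: 'X^2 + (b%:~R) *: 'X - 1.

(* Let al, be, ga be the roots of X^3 - a X^2 + b X - 1 in algC, so that
   s_k(a,b) = al^k + be^k + ga^k.  The roots of the cubic with coefficients
   (s_j, s_{-j}) are al^j, be^j, ga^j, hence s_k(s_j, s_{-j}) = s_{jk}, and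
   s_k(x, y) mod M only depends on x, y mod M.
   For l in {p, q}, the roots of f in F_{l^3} are z, z^l, z^{l^2}, whose product
   z^{l^2+l+1} is 1; so f divides X^lam - 1 modulo l, which lifts to
   X^lam - 1 = f G + l r over Z.  Every root t then satisfies t^lam = 1 + l r(t),
   and expanding (1 + l r(t))^k modulo l^2 gives l | s_lam - 3 and
   s_{lam k} = 3 + k (s_lam - 3) (mod l^2) for k >= 0; this extends to k < 0
   because s is (l lam)-periodic modulo l^2.
   By the Chinese remainder theorem this holds modulo n^2, and it says exactly
   that L(s_k, s_{-k}) = k L(a, b). *)

From HB Require Import structures.
From mathcomp Require Import all_boot all_order all_algebra.
From mathcomp Require Import falgebra fieldext finfield algC.
From mathcomp Require Import ring zify.

Set Implicit Arguments.
Unset Strict Implicit.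
Unset Printing Implicit Defensive.

Import Order.TTheory GRing.Theory Num.Theory.
Local Open Scope ring_scope.

Arguments sZ : simpl never.

Section Recurrence.
Variables x y : int.

Definition sZ_window (k : int) : int * int * int :=
  match k with
  | Posz m => iter m (fwd_step x y) (y, 3, x)
  | Negz m => iter m.+1 (bwd_step x y) (y, 3, x)
  end.

Lemma bwd_stepK : cancel (bwd_step x y) (fwd_step x y).
Proof. by case=> [[u v] w] /=; congr (_, _, _); ring. Qed.

Lemma sZ_windowS k : sZ_window (k + 1) = fwd_step x y (sZ_window k).
Proof.
case: k => [m|[|m]]; first by rewrite -PoszD addn1.
  exact: esym (bwd_stepK _).
rewrite (_ : Negz m.+1 + 1 = Negz m); last lia.
exact: esym (bwd_stepK _).
Qed.

Lemma sZ_windowE k : sZ_window k = (sZ (k - 1) x y, sZ k x y, sZ (k + 1) x y).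
Proof.
have sZE j : sZ j x y = (sZ_window j).1.2 by case: j.
rewrite !sZE sZ_windowS -[in LHS](subrK 1 k) -[in sZ_window k](subrK 1 k) sZ_windowS.
by case: (sZ_window (k - 1)) => [[u v] w].
Qed.

Lemma sZ_rec k :
  sZ (k + 3) x y = x * sZ (k + 2) x y - y * sZ (k + 1) x y + sZ k x y.
Proof.
have -> : k + 3 = k + 1 + 1 + 1 by rewrite -!addrA.
have -> : k + 2 = k + 1 + 1 by rewrite -addrA.
by have := congr1 snd (sZ_windowS (k + 1)); rewrite !sZ_windowE /= addrK.
Qed.

Lemma sZ0 : sZ 0 x y = 3. Proof. by []. Qed.
Lemma sZ1 : sZ 1 x y = x. Proof. by []. Qed.
Lemma sZN1 : sZ (-1) x y = y. Proof. by []. Qed.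

End Recurrence.

Section Rec3Induction.
Variables (R : comPzRingType) (S : pred R) (x y : R) (D : int -> R).
Hypotheses (S_add : forall u v, S u -> S v -> S (u + v))
  (S_mull : forall r u, S u -> S (r * u))
  (S_rec : forall k, S (D (k + 3) - x * D (k + 2) + y * D (k + 1) - D k)).

Let S_comb3 r1 r2 r3 {u1 u2 u3 u4} :
  S u1 -> S u2 -> S u3 -> S u4 -> S (u1 + r1 * u2 + r2 * u3 + r3 * u4).
Proof. by move=> *; rewrite !S_add ?S_mull. Qed.

Lemma rec3_pred_up k :
  S (D k) -> S (D (k + 1)) -> S (D (k + 2)) -> S (D (k + 3)).
Proof.
move=> S0 S1 S2; have := S_comb3 x (- y) 1 (S_rec k) S2 S1 S0.
by congr (S _); ring.
Qed.

Lemma rec3_pred_down k :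
  S (D (k + 1)) -> S (D (k + 2)) -> S (D (k + 3)) -> S (D k).
Proof.
move=> S1 S2 S3; have := S_comb3 (- x) y (- 1) S3 S2 S1 (S_rec k).
by congr (S _); ring.
Qed.

Lemma rec3_pred_ind i :
  S (D i) -> S (D (i + 1)) -> S (D (i + 2)) -> forall k, S (D k).
Proof.
move=> S0 S1 S2.
suff Swin j : [&& S (D (i + j)), S (D (i + j + 1)) & S (D (i + j + 2))].
  by move=> k; have /and3P[] := Swin (k - i); rewrite addrC subrK.
elim/int_rect: j => [|n|n]; first by rewrite addr0 S0 S1 S2.
  set k := i + n%:Z => /and3P[Sk0 Sk1 Sk2].
  have -> : i + n.+1%:Z = k + 1 by rewrite -addn1 PoszD addrA.
  by rewrite -(addrA k 1 1) -(addrA k 1 2) Sk1 Sk2; apply: rec3_pred_up.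
set k := i - n.+1%:Z.
have -> : i - n%:Z = k + 1 by rewrite /k -addn1 PoszD opprD addrA subrK.
rewrite -(addrA k 1 1) -(addrA k 1 2) => /and3P[Sk1 Sk2 Sk3].
by rewrite Sk1 Sk2 !andbT; apply: (rec3_pred_down Sk1 Sk2 Sk3).
Qed.

End Rec3Induction.

Lemma exprz_rec3 (R : comUnitRingType) (x y r : R) : r \is a GRing.unit ->
  r ^+ 3 = x * r ^+ 2 - y * r + 1 ->
  forall k : int, r ^ (k + 3) = x * r ^ (k + 2) - y * r ^ (k + 1) + r ^ k.
Proof.
move=> r_unit r3 k; rewrite !(exprzDr r_unit k) -[r ^ 3]/(r ^+ 3) r3.
by rewrite -[r ^ 2]/(r ^+ 2) expr1z; ring.
Qed.

Section PowerSums.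
Variables (R : comUnitRingType) (x y : int) (al be ga : R).
Hypotheses (prod_roots : al * be * ga = 1) (sum_roots : x%:~R = al + be + ga)
  (sum_pair_roots : y%:~R = al * be + be * ga + ga * al).

Lemma invr_roots : [/\ al^-1 = be * ga, be^-1 = ga * al & ga^-1 = al * be].
Proof.
by split; apply: mulr1_eq; rewrite -prod_roots; ring.
Qed.

Lemma roots_unit : [/\ al \is a GRing.unit, be \is a GRing.unit & ga \is a GRing.unit].
Proof.
by split; apply/unitrPr; [exists (be * ga) | exists (ga * al) | exists (al * be)];
  rewrite -prod_roots; ring.
Qed.

Lemma sZ_power_sum k : (sZ k x y)%:~R = al ^ k + be ^ k + ga ^ k.
Proof.
have [al_u be_u ga_u] := roots_unit; have [al_V be_V ga_V] := invr_roots.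
have cubic r : r \in [:: al; be; ga] -> r ^+ 3 = x%:~R * r ^+ 2 - y%:~R * r + 1.
  by rewrite sum_roots sum_pair_roots -prod_roots !inE => /or3P[] /eqP ->; ring.
have rec r : r \in [:: al; be; ga] -> forall k : int,
    r ^ (k + 3) = x%:~R * r ^ (k + 2) - y%:~R * r ^ (k + 1) + r ^ k.
  move=> r_in; apply: exprz_rec3 (cubic r r_in).
  by move: r_in; rewrite !inE => /or3P[] /eqP ->.
pose D k := (sZ k x y)%:~R - (al ^ k + be ^ k + ga ^ k).
apply/eqP; rewrite -subr_eq0 -/(D k); move: k.
apply: (@rec3_pred_ind _ (pred1 0) x%:~R y%:~R _ _ _ _ (-1)).
- by move=> u v /eqP -> /eqP ->; rewrite /= addr0.
- by move=> r u /eqP ->; rewrite /= mulr0.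
- move=> k; rewrite /D sZ_rec !(rmorphD, rmorphM, rmorphN) /=.
  by rewrite !rec ?inE ?eqxx ?orbT //; apply/eqP; ring.
- by rewrite /D sZN1 !exprN1 al_V be_V ga_V sum_pair_roots; apply/eqP; ring.
- by rewrite /D sZ0 !expr0z; apply/eqP; ring.
- by rewrite /D sZ1 !expr1z sum_roots; apply/eqP; ring.
Qed.

End PowerSums.

Lemma cubic_roots (F : closedFieldType) (x y : F) : exists al be ga : F,
  [/\ al * be * ga = 1, x = al + be + ga & y = al * be + be * ga + ga * al].
Proof.
have [al al_root] := @solve_monicpoly F 3 (nth 0 [:: 1; - y; x]) isT.
rewrite !big_ord_recr big_ord0 /= add0r expr0 mulr1 expr1 in al_root.
have al_neq0 : al != 0.
  by apply: contra_eq_neq al_root => ->; rewrite !expr0n /= !mulr0 !addr0 eq_sym oner_neq0.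
pose s := x - al.
have [be be_root] := @solve_monicpoly F 2 (nth 0 [:: - al^-1; s]) isT.
rewrite !big_ord_recr big_ord0 /= add0r expr0 mulr1 expr1 in be_root.
have y_al : y = al * s + al^-1.
  apply: (mulfI al_neq0); rewrite mulrDr mulfV //; apply/eqP; rewrite -subr_eq0.
  have -> : al * y - (al * (al * s) + 1) = al ^+ 3 - (1 + - y * al + x * al ^+ 2).
    by rewrite /s; ring.
  by rewrite al_root subrr.
have be_quad : s * be - be ^+ 2 = al^-1 by rewrite be_root; ring.
exists al, be, (s - be); split.
- rewrite (_ : al * be * (s - be) = al * (s * be - be ^+ 2)); last by ring.
  by rewrite be_quad mulfV.
- by rewrite /s; ring.
- by rewrite y_al -be_quad; ring.
Qed.

(* The cubic with coefficients (s_j, s_{-j}) has roots al^j, be^j, ga^j. *)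
Lemma sZ_comp (x y j k : int) : sZ k (sZ j x y) (sZ (- j) x y) = sZ (j * k) x y.
Proof.
have [al [be [ga [prod sum psum]]]] := cubic_roots (x%:~R : algC) y%:~R.
have [al_u be_u ga_u] := roots_unit prod; have [al_V be_V ga_V] := invr_roots prod.
have power_sum := sZ_power_sum prod sum psum.
apply: (@intr_inj algC); rewrite power_sum -!exprz_exp.
apply: sZ_power_sum; rewrite ?power_sum //.
  by rewrite -!exprzMl ?unitrM ?al_u // prod exp1rz.
by rewrite -!exprz_inv al_V be_V ga_V !exprzMl //; ring.
Qed.

Lemma sZ_congr (M x y x' y' : int) : (M %| x - x')%Z -> (M %| y - y')%Z ->
  forall k, (M %| sZ k x y - sZ k x' y')%Z.
Proof.
move=> dvd_x dvd_y.
apply: (@rec3_pred_ind _ (fun u => M %| u)%Z x y _ _ _ _ (-1)).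
- exact: rpredD.
- by move=> r u; apply: dvdz_mull.
- move=> k /=; rewrite !sZ_rec.
  have -> : x * sZ (k + 2) x y - y * sZ (k + 1) x y + sZ k x y -
      (x' * sZ (k + 2) x' y' - y' * sZ (k + 1) x' y' + sZ k x' y') -
      x * (sZ (k + 2) x y - sZ (k + 2) x' y') + y * (sZ (k + 1) x y - sZ (k + 1) x' y') -
      (sZ k x y - sZ k x' y') =
    (x - x') * sZ (k + 2) x' y' - (y - y') * sZ (k + 1) x' y' by ring.
  by rewrite rpredB ?dvdz_mulr.
- exact: dvd_y.
- by rewrite subrr dvdz0.
- exact: dvd_x.
Qed.

Lemma mul_distinct_cubic_roots (R : idomainType) (A B u v w : R) :
  let f r := r ^+ 3 - A * r ^+ 2 + B * r - 1 in
  u != v -> u != w -> v != w -> f u = 0 -> f v = 0 -> f w = 0 -> u * v * w = 1.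
Proof.
move=> f neq_uv neq_uw neq_vw fu fv fw.
have cancel_diff (r s t : R) : r != s -> (r - s) * t = 0 -> t = 0.
  by move=> neq_rs /eqP; rewrite mulf_eq0 subr_eq0 (negPf neq_rs) => /eqP.
pose Q (r : R) := u ^+ 2 + u * r + r ^+ 2 - A * (u + r) + B.
have Q0 r : u != r -> f r = 0 -> Q r = 0.
  move=> neq_ur fr; apply: (cancel_diff u r) => //.
  by rewrite -(subrr 0) -{1}fu -fr /f /Q; ring.
have sum_uvw : u + v + w - A = 0.
  apply: (cancel_diff v w) => //.
  by rewrite -(subrr 0) -{1}(Q0 v) // -(Q0 w) // /Q; ring.
apply/eqP; rewrite -subr_eq0; apply/eqP.
have -> : u * v * w - 1 =
    f u - (u + v + w - A) * u ^+ 2 - (Q v - (u + v) * (u + v + w - A)) * u.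
  by rewrite /f /Q; ring.
by rewrite fu sum_uvw Q0 //; ring.
Qed.

Lemma size_fpoly p a b : size (fpoly p a b) = 4%N.
Proof.
rewrite /fpoly -!addrA size_polyDl ?size_polyXn //.
apply: (leq_ltn_trans (size_polyD _ _)); rewrite gtn_max size_polyN; apply/andP; split.
  by apply: (leq_ltn_trans (size_scale_leq _ _)); rewrite size_polyXn.
apply: (leq_ltn_trans (size_polyD _ _)); rewrite gtn_max size_polyN size_poly1 andbT.
by apply: (leq_ltn_trans (size_scale_leq _ _)); rewrite size_polyX.
Qed.

Lemma irredp_dvdp_root (F : fieldType) (K : idomainType) (f : {rmorphism F -> K})
    (p q : {poly F}) (z : K) :
  irreducible_poly p -> root (map_poly f p) z -> root (map_poly f q) z -> p %| q.
Proof.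
move=> p_irr pz qz; apply: contraT; rewrite -irreducible_poly_coprime //.
by rewrite -(coprimep_map f) => /coprimep_root /(_ pz); rewrite -rootE qz.
Qed.

Section PrimeFieldCubicExtension.
Variables (p : nat) (a b : int) (L : fieldExtType 'F_p) (z : L).
Hypotheses (p_prime : prime p) (dimL : \dim {:L} = 3%N)
  (z_gen : <<1; z>>%VS = fullv) (fz : root (map_poly (in_alg L) (fpoly p a b)) z).

Lemma Fp_scalar_expn (e : 'F_p) : (e%:A : L) ^+ p = e%:A.
Proof. by rewrite exprZn expr1n -[X in e ^+ X](card_Fp p_prime) expf_card. Qed.

Lemma horner_Fp_poly_expn (g : {poly 'F_p}) (w : L) :
  (map_poly (in_alg L) g).[w ^+ p] = (map_poly (in_alg L) g).[w] ^+ p.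
Proof.
have chL : p \in [pchar L] by rewrite pchar_lalg pchar_Fp.
rewrite -!(pFrobenius_autE chL) -horner_map -map_poly_comp; congr (_.[_]).
by apply: eq_map_poly => e /=; rewrite pFrobenius_autE Fp_scalar_expn.
Qed.

Lemma expn_p3 (w : L) : w ^+ (p ^ 3) = w.
Proof.
have := Fermat's_little_theorem {:L}%AS w.
by rewrite card_Fp //= dimL memvf => /esym/eqP.
Qed.

Lemma expn_p_neq : z ^+ p != z.
Proof.
apply/negP=> /eqP zp; move: dimL; rewrite -z_gen (Fadjoin_idP _) ?dimv1 //.
by rewrite (Fermat's_little_theorem 1%AS) card_Fp // dimv1 expn1 zp.
Qed.

(* The roots of [fpoly] in [L] are z, z^p and z^(p^2); their product is 1. *)
Lemma Fp_cubic_norm : z ^+ (p ^ 2 + p + 1) = 1.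
Proof.
have expnS_p m : z ^+ (p ^ m.+1) = (z ^+ (p ^ m)) ^+ p by rewrite expnSr exprM.
have neq_p2 : z ^+ (p ^ 2) != z.
  by apply: contraNneq expn_p_neq => zp2; apply/eqP; rewrite -[RHS]expn_p3 expnS_p zp2.
have neq_p_p2 : z ^+ p != z ^+ (p ^ 2).
  apply: contraNneq neq_p2 => zp_p2; apply/eqP.
  by rewrite -[RHS]expn_p3 (expnS_p 2) -zp_p2 -exprM mulnn.
pose A : L := (a%:~R : 'F_p)%:A; pose B : L := (b%:~R : 'F_p)%:A.
have fE w : (map_poly (in_alg L) (fpoly p a b)).[w] = w ^+ 3 - A * w ^+ 2 + B * w - 1.
  rewrite /fpoly !(rmorphB, rmorphD) /= !map_polyZ !map_polyXn map_polyX rmorph1 /=.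
  by rewrite !hornerE.
have root_expn m : (map_poly (in_alg L) (fpoly p a b)).[z ^+ (p ^ m)] = 0.
  elim: m => [|m IHm]; first by rewrite expn0 expr1; apply/eqP.
  by rewrite expnS_p horner_Fp_poly_expn IHm expr0n eqn0Ngt prime_gt0.
rewrite !exprD expr1; apply: (mul_distinct_cubic_roots (A := A) (B := B)).
- by rewrite eq_sym.
- exact: neq_p2.
- exact: expn_p_neq.
- by rewrite /= -fE (root_expn 2).
- by rewrite /= -fE (root_expn 1).
- by rewrite /= -fE (root_expn 0).
Qed.

End PrimeFieldCubicExtension.

Lemma fpoly_dvd_Xn_sub1 (p : nat) (a b : int) (lam : nat) :
  prime p -> irreducible_poly (fpoly p a b) -> (p ^ 2 + p + 1 %| lam)%N ->
  fpoly p a b %| 'X^lam - 1.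
Proof.
move=> p_prime f_irr /dvdnP[c ->].
have [L dimL [z fz z_gen]] := irredp_FAdjoin f_irr; rewrite size_fpoly in dimL.
apply: (irredp_dvdp_root f_irr fz).
rewrite rmorphB /= map_polyXn rmorph1 rootE !hornerE mulnC exprM.
by rewrite (Fp_cubic_norm p_prime dimL z_gen fz) expr1n subrr.
Qed.

Definition fZ (a b : int) : {poly int} := 'X^3 - a *: 'X^2 + b *: 'X - 1.

Lemma fpolyE (p : nat) (a b : int) : fpoly p a b = map_poly intr (fZ a b).
Proof.
by rewrite /fZ !(rmorphB, rmorphD) /= !map_polyZ !map_polyXn map_polyX rmorph1.
Qed.

Lemma map_intr_poly_eq0 (R : nzRingType) (p : nat) (D : {poly int}) :
  p \in [pchar R] -> map_poly (intr : int -> R) D = 0 ->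
  D = p%:Z *: map_poly (fun c => (c %/ p%:Z)%Z) D.
Proof.
move=> chRp D0; apply/polyP => i; rewrite coefZ coef_map_id0 ?div0z // mulrC divzK //.
by rewrite (dvdz_pcharf chRp) -(coef_map_id0 _ _ (mulr0z 1)) D0 coef0.
Qed.

Lemma Xn_sub1_lift (p : nat) (a b : int) (lam : nat) : prime p ->
  fpoly p a b %| 'X^lam - 1 ->
  exists r G : {poly int}, 'X^lam - 1 = fZ a b * G + p%:Z *: r.
Proof.
move=> p_prime /dvdpP[g Xn_g].
pose G := map_poly (fun c : 'F_p => (nat_of_ord c)%:Z) g.
have map_G : map_poly intr G = g.
  by apply/polyP => i; rewrite !coef_map_id0 //=; apply: natr_Zp.
exists (map_poly (fun c => (c %/ p%:Z)%Z) ('X^lam - 1 - fZ a b * G)), G.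
have D0 : map_poly (intr : int -> 'F_p) ('X^lam - 1 - fZ a b * G) = 0.
  by rewrite rmorphB rmorphM /= -fpolyE map_G rmorphB /= map_polyXn rmorph1 Xn_g mulrC subrr.
by rewrite -(map_intr_poly_eq0 (pchar_Fp p_prime) D0) [RHS]addrC subrK.
Qed.

Definition root_trace (x y : int) (h : {poly int}) : int :=
  \sum_(j < size h) h`_j * sZ j x y.

Lemma pow_expand (R : comPzRingType) (c u : R) (m : nat) :
  exists w, (1 + c * u) ^+ m = 1 + m%:R * c * u + c ^+ 2 * w.
Proof.
elim: m => [|m [w IH]]; first by exists 0; rewrite expr0 mulr0 mul0r mul0r !addr0.
by exists (m%:R * u ^+ 2 + w + c * u * w); rewrite exprS IH mulrS; ring.
Qed.

Definition horner_int (t : algC) : {poly int} -> algC := horner_eval t \o map_poly intr.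
HB.instance Definition _ t := GRing.RMorphism.on (horner_int t).

Lemma horner_intX t : horner_int t 'X = t.
Proof. by rewrite /horner_int /= map_polyX horner_evalE hornerX. Qed.

Lemma horner_intC t (c : int) : horner_int t c%:P = c%:~R.
Proof. by rewrite /horner_int /= map_polyC horner_evalE hornerC. Qed.

Lemma horner_intZ t (c : int) h : horner_int t (c *: h) = c%:~R * horner_int t h.
Proof. by rewrite -mul_polyC rmorphM /= horner_intC. Qed.

Section CubicRoots.
Variables (x y : int) (al be ga : algC).
Hypotheses (prod_roots : al * be * ga = 1) (sum_roots : x%:~R = al + be + ga)
  (sum_pair_roots : y%:~R = al * be + be * ga + ga * al).

Lemma root_trace_power_sum h :
  (root_trace x y h)%:~R = horner_int al h + horner_int be h + horner_int ga h.
Proof.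
have size_h : (size (map_poly (intr : int -> algC) h) <= size h)%N.
  by rewrite size_map_inj_poly //; apply: intr_inj.
rewrite /horner_int /= !horner_evalE rmorph_sum !(horner_coef_wide _ size_h).
rewrite -!big_split; apply: eq_bigr => j _.
rewrite rmorphM coef_map /= (sZ_power_sum prod_roots sum_roots sum_pair_roots).
by rewrite -!exprnP; ring.
Qed.

Lemma fZ_root t : t \in [:: al; be; ga] -> horner_int t (fZ x y) = 0.
Proof.
move=> t_root; rewrite /fZ !(rmorphB, rmorphD) /= !horner_intZ !rmorphXn rmorph1 /=.
rewrite horner_intX sum_roots sum_pair_roots -prod_roots.
have : (t - al) * (t - be) * (t - ga) = 0.
  by move: t_root; rewrite !inE => /or3P[] /eqP ->; rewrite subrr ?mulr0 ?mul0r.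
by apply: etrans; ring.
Qed.

End CubicRoots.

(* Each root t satisfies t^lam = 1 + l r(t), and (1 + l r)^m = 1 + m l r + l^2 w. *)
Lemma sZ_add_lam_mul (l lam : nat) (a b : int) (r G : {poly int}) :
  'X^lam - 1 = fZ a b * G + l%:Z *: r -> forall i m : nat,
  ((l ^ 2)%N%:Z %| sZ (i + lam * m)%N a b - sZ i a b
                   - (m * l)%N%:Z * root_trace a b ('X^i * r))%Z.
Proof.
move=> Xn_lift i m; pose c : {poly int} := (l%:Z)%:P.
have [al [be [ga [prod sum psum]]]] := cubic_roots (a%:~R : algC) b%:~R.
have [w expand] := pow_expand c r m.
suff -> : sZ (i + lam * m)%N a b - sZ i a b - (m * l)%N%:Z * root_trace a b ('X^i * r)
    = (l ^ 2)%N%:Z * root_trace a b ('X^i * w) by apply: dvdz_mulr.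
have Xn_eq : 'X^lam = fZ a b * G + (1 + c * r).
  by rewrite mul_polyC addrCA -Xn_lift addrC subrK.
have lam_root t : t \in [:: al; be; ga] -> t ^+ lam = horner_int t (1 + c * r).
  move=> t_root; have := congr1 (horner_int t) Xn_eq; rewrite rmorphXn /= horner_intX => ->.
  by rewrite rmorphD rmorphM /= (fZ_root prod sum psum t_root) mul0r add0r.
have root_expn t : t \in [:: al; be; ga] -> t ^+ (i + lam * m) =
    horner_int t ('X^i * (1 + m%:R * c * r + c ^+ 2 * w)).
  move=> t_root; rewrite -expand rmorphM !rmorphXn /= horner_intX.
  by rewrite exprD exprM lam_root.
apply: (@intr_inj algC); rewrite !(rmorphB, rmorphM) /= !(root_trace_power_sum prod sum psum).
rewrite !(sZ_power_sum prod sum psum) -!exprnP !root_expn ?inE ?eqxx ?orbT //.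
rewrite !(rmorphM, rmorphD, rmorphXn, rmorph_nat, rmorph1) /= !horner_intC.
by rewrite !horner_intX -!pmulrn; ring.
Qed.

Lemma sZ_shift_congr (M T x y : int) :
  (forall i : nat, (M %| sZ (i%:Z + T) x y - sZ i x y)%Z) ->
  forall k : int, (M %| sZ (k + T) x y - sZ k x y)%Z.
Proof.
move=> dvd_nat.
apply: (@rec3_pred_ind _ (fun u => M %| u)%Z x y _ _ _ _ 0
  (dvd_nat 0%N) (dvd_nat 1%N) (dvd_nat 2%N)).
- exact: rpredD.
- by move=> c u; apply: dvdz_mull.
move=> k /=; rewrite -!(addrAC _ T) !sZ_rec.
by rewrite (_ : _ - _ = 0) ?dvdz0 //; ring.
Qed.

Section LamMulCongr.
Variables (l lam : nat) (a b : int) (r G : {poly int}).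
Hypotheses (l_gt0 : (0 < l)%N) (Xn_lift : 'X^lam - 1 = fZ a b * G + l%:Z *: r).

Let sZ_lam_mulnE (m : nat) : ((l ^ 2)%N%:Z %|
  sZ (lam * m)%N a b - 3 - (m * l)%N%:Z * root_trace a b r)%Z.
Proof. by have := sZ_add_lam_mul Xn_lift 0 m; rewrite add0n mul1r. Qed.

Let l_dvd_l2 : (l%:Z %| (l ^ 2)%N%:Z)%Z.
Proof. by rewrite -mulnn PoszM dvdz_mulr. Qed.

Lemma sZ_lam_dvd : (l%:Z %| sZ lam a b - 3)%Z.
Proof.
have := dvdz_trans l_dvd_l2 (sZ_lam_mulnE 1); rewrite muln1 mul1n => dvd_diff.
by rewrite -(subrK (l%:Z * root_trace a b r) (sZ lam a b - 3)) rpredD ?dvdz_mulr.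
Qed.

Lemma sZ_lam_mulnat (m : nat) :
  ((l ^ 2)%N%:Z %| sZ (lam * m)%N a b - 3 - m%:Z * (sZ lam a b - 3))%Z.
Proof.
have -> : sZ (lam * m)%N a b - 3 - m%:Z * (sZ lam a b - 3) =
    (sZ (lam * m)%N a b - 3 - (m * l)%N%:Z * root_trace a b r)
    - m%:Z * (sZ (lam * 1)%N a b - 3 - (1 * l)%N%:Z * root_trace a b r).
  by rewrite muln1 mul1n PoszM; ring.
by rewrite rpredB ?dvdz_mull.
Qed.

Lemma sZ_lam_period (M : nat) (k : int) :
  ((l ^ 2)%N%:Z %| sZ (k + (lam * (l * M))%N) a b - sZ k a b)%Z.
Proof.
apply: sZ_shift_congr => i; set t := root_trace a b ('X^i * r).
have -> : sZ (i + (lam * (l * M))%N) a b - sZ i a b =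
    (sZ (i + lam * (l * M))%N a b - sZ i a b - (l * M * l)%N%:Z * t)
    + (l ^ 2)%N%:Z * (M%:Z * t).
  by rewrite PoszD -mulnn !PoszM; ring.
by rewrite rpredD ?(sZ_add_lam_mul Xn_lift) ?dvdz_mulr.
Qed.

(* A negative multiple -lam M is moved to the nonnegative multiple
   lam M (l - 1) by the period lam l M. *)
Lemma sZ_lam_mul (k : int) :
  ((l ^ 2)%N%:Z %| sZ (lam%:Z * k) a b - 3 - k * (sZ lam a b - 3))%Z.
Proof.
case: k => [m|m]; first by rewrite -PoszM sZ_lam_mulnat.
pose M := m.+1; have l1E : Posz (l - 1) = l%:Z - 1 by lia.
pose X := sZ (lam * (M * (l - 1)))%N a b; pose Y := sZ (lam%:Z * Negz m) a b.
have l2_dvd_XY : ((l ^ 2)%N%:Z %| X - Y)%Z.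
  have := sZ_lam_period M (lam%:Z * Negz m).
  rewrite (_ : lam%:Z * Negz m + _ = (lam * (M * (l - 1)))%N) //.
  by rewrite /M NegzE !PoszM l1E; ring.
have l2_dvd_l : ((l ^ 2)%N%:Z %| l%:Z * (sZ lam a b - 3))%Z.
  by rewrite -mulnn PoszM dvdz_mul // sZ_lam_dvd.
have -> : Y - 3 - Negz m * (sZ lam a b - 3) = - (X - Y)
    + (X - 3 - (M * (l - 1))%N%:Z * (sZ lam a b - 3)) + M%:Z * (l%:Z * (sZ lam a b - 3)).
  by rewrite /M NegzE PoszM l1E; ring.
apply: rpredD; last exact: dvdz_mull l2_dvd_l.
by apply: rpredD; [rewrite rpredN | apply: sZ_lam_mulnat].
Qed.

End LamMulCongr.

Lemma s_mod_congr (n : nat) (k x y : int) :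
  ((n ^ 2)%N%:Z %| s_mod n k x y - sZ k x y)%Z.
Proof. by rewrite -eqz_mod_dvd /s_mod modz_mod. Qed.

Lemma sZ_s_mod_comp (n : nat) (j k x y : int) :
  ((n ^ 2)%N%:Z %| sZ k (s_mod n j x y) (s_mod n (- j) x y) - sZ (j * k) x y)%Z.
Proof. by rewrite -sZ_comp; apply: sZ_congr; apply: s_mod_congr. Qed.

Lemma intr_Zp_eq0 (n : nat) (c : int) :
  (1 < n)%N -> (n%:Z %| c)%Z -> (c%:~R : 'Z_n) = 0.
Proof.
by move=> n_gt1 /dvdzP[e ->]; rewrite intrM -[(n%:Z)%:~R]/(n%:R) (pchar_Zp n_gt1) mulr0.
Qed.

Lemma Gamma_L_scale (n lam : nat) (x y x' y' k : int) : (1 < n)%N ->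
  (n%:Z %| sZ lam x y - 3)%Z ->
  ((n ^ 2)%N%:Z %| sZ lam x' y' - 3 - k * (sZ lam x y - 3))%Z ->
  Gamma n lam x' y' /\ L n lam x' y' = k%:~R * L n lam x y.
Proof.
move=> n_gt1 dvd_s dvd_s'.
have n_dvd_n2 : (n%:Z %| (n ^ 2)%N%:Z)%Z by rewrite -mulnn PoszM dvdz_mulr.
have n_dvd_mod x1 y1 := dvdz_trans n_dvd_n2 (s_mod_congr n lam x1 y1).
set A := s_mod n lam x y; set V := s_mod n lam x' y'.
have A3 : (n%:Z %| A - 3)%Z by rewrite -(subrK (sZ lam x y) A) -addrA rpredD ?n_dvd_mod.
have V3 : (n%:Z %| V - 3)%Z.
  have -> : V - 3 = (V - sZ lam x' y') + (sZ lam x' y' - 3 - k * (sZ lam x y - 3))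
      + k * (sZ lam x y - 3) by ring.
  apply: rpredD; last exact: dvdz_mull.
  by apply: rpredD; [apply: n_dvd_mod | apply: dvdz_trans dvd_s'].
split; first exact: V3.
rewrite /L -/A -/V; set u := ((A - 3) %/ n%:Z)%Z; set v := ((V - 3) %/ n%:Z)%Z.
have n_neq0 : n%:Z != 0 by rewrite eqz_nat -lt0n ltnW.
have : (n%:Z %| v - k * u)%Z.
  rewrite -(dvdz_mul2l n_neq0) mulrBr mulrCA /u /v !(mulrC n%:Z) !divzK //.
  rewrite -PoszM mulnn.
  have -> : V - 3 - k * (A - 3) = (V - sZ lam x' y')
      + (sZ lam x' y' - 3 - k * (sZ lam x y - 3)) - k * (A - sZ lam x y) by ring.
  by apply: rpredB; [apply: rpredD => //; apply: s_mod_congr | apply/dvdz_mull/s_mod_congr].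
by move=> /(intr_Zp_eq0 n_gt1) /eqP; rewrite rmorphB rmorphM /= subr_eq0 => /eqP.
Qed.

Lemma Gamma_L_s_mod (n lam : nat) (x y k : int) : (1 < n)%N ->
  (n%:Z %| sZ lam x y - 3)%Z ->
  ((n ^ 2)%N%:Z %| sZ (lam%:Z * k) x y - 3 - k * (sZ lam x y - 3))%Z ->
  Gamma n lam (s_mod n k x y) (s_mod n (- k) x y) /\
  L n lam (s_mod n k x y) (s_mod n (- k) x y) = k%:~R * L n lam x y.
Proof.
move=> n_gt1 dvd_lam dvd_lamk; apply: Gamma_L_scale => //.
set s' := sZ lam _ _.
have -> : s' - 3 - k * (sZ lam x y - 3) = (s' - sZ (lam%:Z * k) x y)
    + (sZ (lam%:Z * k) x y - 3 - k * (sZ lam x y - 3)) by ring.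
by apply: rpredD => //; rewrite (mulrC lam%:Z) sZ_s_mod_comp.
Qed.

Theorem proposition2 (p q : nat) (a b : int) :
  prime p -> prime q -> p != q -> odd p -> odd q ->
  irreducible_poly (fpoly p a b) ->
  irreducible_poly (fpoly q a b) ->
  L (p * q) (lcmn (p ^ 2 + p + 1) (q ^ 2 + q + 1)) a b \is a GRing.unit ->
  forall k : int,
    let n := (p * q)%N in
    let lam := lcmn (p ^ 2 + p + 1) (q ^ 2 + q + 1) in
    Gamma n lam (s_mod n k a b) (s_mod n (- k) a b) /\
    L n lam (s_mod n k a b) (s_mod n (- k) a b) / L n lam a b = k%:~R.
Proof.
move=> p_prime q_prime neq_pq _ _ irr_p irr_q L_unit k n lam.
have [r_p [G_p lift_p]] :=
  Xn_sub1_lift p_prime (fpoly_dvd_Xn_sub1 (lam := lam) p_prime irr_p (dvdn_lcml _ _)).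
have [r_q [G_q lift_q]] :=
  Xn_sub1_lift q_prime (fpoly_dvd_Xn_sub1 (lam := lam) q_prime irr_q (dvdn_lcmr _ _)).
have cop_pq : coprime p q by rewrite prime_coprime // dvdn_prime2.
have n_gt1 : (1 < n)%N by have := prime_gt1 p_prime; have := prime_gt1 q_prime; nia.
have [||Gamma_k L_k] := @Gamma_L_s_mod n lam a b k n_gt1.
- by rewrite PoszM Gauss_dvdz ?coprimezE // (sZ_lam_dvd lift_p) (sZ_lam_dvd lift_q).
- rewrite expnMn PoszM Gauss_dvdz ?coprimezE ?coprimeXl ?coprimeXr //.
  by rewrite (sZ_lam_mul (prime_gt0 p_prime) lift_p) (sZ_lam_mul (prime_gt0 q_prime) lift_q).
by split => //; rewrite L_k mulrK.
Qed.
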